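(* Let $M$ be a complex $N\times N$ matrix ($N\ge 1$) whose eigenvalues $\lambda_1,\dots,\lambda_N$ are pairwise distinct, let $C(z)=\det(zI-M)=\prod_{k=1}^N(z-\lambda_k)$, and define the response function $$F(t)=\sum_{k=1}^{N}\frac{\exp(i\lambda_k t)}{C'(\lambda_k)},\qquad C'(\lambda_k)=\prod_{m\neq k}(\lambda_k-\lambda_m),$$ and the elementary symmetric polynomials $S_m[\lambda]=\sum_{1\le k_1<\cdots<k_m\le N}\lambda_{k_1}\cdots\lambda_{k_m}$ (with $S_0=1$). Then for all $t\in\mathbb{C}$, $$\exp(itM)=\sum_{n=0}^{N-1}M^n E_n(t),\qquad E_n(t)=\sum_{m=0}^{N-1-n}(-1)^m S_m[\lambda]\left(-i\frac{d}{dt}\right)^{N-1-n-m}F(t).$$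
   Context: $I$ denotes the $N\times N$ identity matrix and $\exp$ the matrix exponential. The symmetric polynomials $S_m[\lambda]$ can equivalently be computed from traces of powers of $M$ via $\det(I+tM)=\sum_{m=0}^N t^m S_m$. *)

(* complex numbers = mathcomp-real-closed's R[i]
   for R : realType, taken as the regular algebra (R[i])^o so that it carries
   the normed-module / topology structure of MathComp-Analysis. *)
From HB Require Import structures.
From mathcomp Require Import all_boot all_order all_algebra.
From mathcomp Require Import all_classical all_reals all_analysis.
From mathcomp Require Export complex.
Import Order.TTheory GRing.Theory Num.Theory.
Import numFieldNormedType.Exports.
Set Implicit Arguments. Unset Strict Implicit. Unset Printing Implicit Defensive.
Local Open Scope ring_scope.
Local Open Scope complex_scope.

Definition expC (R : realType) (z : (R[i])^o) : (R[i])^o :=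
  limn (series (fun n => (n`!%:R)^-1 * z ^+ n)).

Definition expmx (R : realType) (N : nat) (A : 'M[(R[i])^o]_N) : 'M[(R[i])^o]_N :=
  limn (series (fun n => (n`!%:R)^-1 *: A ^+ n)).

Definition Cprime (R : realType) (N : nat) (lambda : 'I_N -> (R[i])^o) (k : 'I_N)
  : (R[i])^o := \prod_(m < N | m != k) (lambda k - lambda m).

Definition respF (R : realType) (N : nat) (lambda : 'I_N -> (R[i])^o) (t : (R[i])^o)
  : (R[i])^o := \sum_(k < N) expC ('i * lambda k * t) / Cprime lambda k.

Definition esymS (R : realType) (N : nat) (lambda : 'I_N -> (R[i])^o) (m : nat)
  : (R[i])^o := \sum_(A : {set 'I_N} | #|A| == m) \prod_(k in A) lambda k.

Definition Ecoef (R : realType) (N : nat) (lambda : 'I_N -> (R[i])^o) (n : nat)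
  (t : (R[i])^o) : (R[i])^o :=
  \sum_(m < N - n) (-1) ^+ m * esymS lambda m *
     ((- 'i) ^+ (N.-1 - n - m) * derive1n (N.-1 - n - m) (respF lambda) t).

(* Since the lambda_k are distinct roots of the characteristic polynomial C,
   Cayley-Hamilton makes p(M) depend only on the values p(lambda_k); Lagrange
   interpolation gives p(M) = sum_k p(lambda_k) / C'(lambda_k) q_k(M) with
   q_k = C / (X - lambda_k).  Applied termwise to the exponential series this
   yields exp(sM) = sum_k e^(s lambda_k) / C'(lambda_k) q_k(M).  Synthetic
   division of C by X - lambda_k gives the coefficients
   [q_k]_n = sum_m (-1)^m S_m lambda_k^(N-1-n-m), and
   lambda_k^j e^(i lambda_k t) = (-i d/dt)^j e^(i lambda_k t), so collecting
   the powers of M produces the E_n(t).  The derivative of the complex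
   exponential comes from the bound |e^(z+w) - e^z - w e^z| <= |w|^2 e^(|z|+1)
   for |w| <= 1. *)

From HB Require Import structures.
From mathcomp Require Import all_boot all_order all_algebra.
From mathcomp Require Import all_classical all_reals all_analysis.
From mathcomp Require Import complex.
From mathcomp Require Import ring zify.
Import Order.TTheory GRing.Theory Num.Theory.
Import numFieldNormedType.Exports.
Set Implicit Arguments. Unset Strict Implicit. Unset Printing Implicit Defensive.

Local Open Scope classical_set_scope.
Local Open Scope ring_scope.
Local Open Scope complex_scope.

Section ComplexParts.
Variable R : rcfType.

Lemma Re_sum I (r : seq I) (P : pred I) (f : I -> R[i]) :
  complex.Re (\sum_(i <- r | P i) f i) = \sum_(i <- r | P i) complex.Re (f i).
Proof. by apply: big_morph => // - [? ?] [? ?]. Qed.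

Lemma Im_sum I (r : seq I) (P : pred I) (f : I -> R[i]) :
  complex.Im (\sum_(i <- r | P i) f i) = \sum_(i <- r | P i) complex.Im (f i).
Proof. by apply: big_morph => // - [? ?] [? ?]. Qed.

Lemma normc_ge_Im (x : R[i]) : `|complex.Im x|%:C <= `|x|.
Proof.
by case: x => a b; simpc; rewrite -sqrtr_sqr ler_wsqrtr // lerDr sqr_ge0.
Qed.

Lemma normc_le_ReIm (x : R[i]) : `|x| <= (`|complex.Re x| + `|complex.Im x|)%:C.
Proof.
case: x => a b; rewrite normc_def /= lecR.
rewrite -[X in _ <= X]ger0_norm ?addr_ge0 // -(sqrtr_sqr (`|a| + `|b|)).
apply: ler_wsqrtr.
by rewrite sqrrD !real_normK ?num_real// lerD2r lerDl mulrn_wge0// mulr_ge0.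
Qed.

Lemma normC_real (x : R[i]) : `|x| = (complex.Re `|x|)%:C.
Proof. by rewrite RRe_real // normr_real. Qed.

End ComplexParts.

Lemma exprD_quadratic_tail (R : comNzRingType) (a b : R) n : (a + b) ^+ n.+1 =
  a ^+ n.+1 + a ^+ n * b *+ n.+1 +
  \sum_(i < n) (a ^+ (n.+1 - i.+2) * b ^+ i.+2) *+ 'C(n.+1, i.+2).
Proof.
rewrite exprDn big_ord_recl big_ord_recl /= !expr0 !mulr1 bin0 mulr1n.
by rewrite subn0 subn1 /= expr1 bin1 addrA.
Qed.

Lemma norm_exprD_sub_linear_le (R : numDomainType) (z w : R) n : `|w| <= 1 ->
  `|(z + w) ^+ n.+1 - z ^+ n.+1 - z ^+ n * w *+ n.+1| <=
  `|w| ^+ 2 * (`|z| + 1) ^+ n.+1.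
Proof.
move=> w1; rewrite exprD_quadratic_tail.
have -> : forall A B S : R, A + B + S - A - B = S by move=> *; ring.
apply: le_trans (ler_norm_sum _ _ _) _.
apply: (@le_trans _ _
  (\sum_(i < n) `|w| ^+ 2 * (`|z| ^+ (n.+1 - i.+2) *+ 'C(n.+1, i.+2)))).
  apply: ler_sum => i _; rewrite normrMn normrM !normrX -mulrnAl mulrC.
  apply: ler_wpM2r; first by rewrite mulrn_wge0 ?exprn_ge0.
  by rewrite -addn2 exprD ler_piMl ?exprn_ge0 ?exprn_ile1.
rewrite -mulr_sumr; apply: ler_wpM2l; first by rewrite exprn_ge0.
rewrite exprD_quadratic_tail; under [X in _ <= _ + X]eq_bigr do rewrite expr1n mulr1.
by rewrite lerDr addr_ge0 ?mulrn_wge0 ?mulr_ge0 ?exprn_ge0.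
Qed.

Lemma lim_norm_le (K : numFieldType) (V : normedModType K) (u : nat -> V) (l : V) (B : K) :
  u @ \oo --> l -> (forall n, `|u n| <= B) -> `|l| <= B.
Proof.
move=> ul uB; apply/ler_addgt0Pr => e e0.
move/cvgrPdist_lt: ul => /(_ e e0) [m _ /(_ m (leqnn m)) /= ulm].
rewrite -[l](subrK (u m)) (le_trans (ler_normD _ _)) // addrC.
by apply: lerD => //; apply: ltW.
Qed.

Lemma difference_quotient_sub (F : fieldType) (a h E E' : F) : h != 0 ->
  a * E - h^-1 * (E' - E) = - (h^-1 * (E' - E - a * h * E)).
Proof. by move=> h0; field. Qed.

Section ComplexExponential.
Variable R : realType.
Local Notation C := ((R[i])^o).

(* [(R[i])^o] has no complete-space instance: convergence of the exponential
   series is obtained from its real and imaginary parts. *)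
Lemma cvg_complex (u : nat -> C) (a b : R) :
  (fun n => complex.Re (u n)) @ \oo --> (a : R^o) ->
  (fun n => complex.Im (u n)) @ \oo --> (b : R^o) ->
  u @ \oo --> (a +i* b : C).
Proof.
move=> ua ub; apply/cvgrPdist_lt => e e0.
have e2 : 0 < complex.Re e / 2.
  by move: e0; rewrite ltcE => /andP[_ ?]; rewrite divr_gt0.
move/cvgrPdist_lt: ua => /(_ _ e2) ua; move/cvgrPdist_lt: ub => /(_ _ e2) ub.
near=> n.
have uRe : `|a - complex.Re (u n)| < complex.Re e / 2 by near: n.
have uIm : `|b - complex.Im (u n)| < complex.Re e / 2 by near: n.
apply: le_lt_trans (normc_le_ReIm _) _.
rewrite -[e]RRe_real ?gtr0_real // ltcR (splitr (complex.Re e)).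
by case: (u n) uRe uIm => c d /= ? ?; apply: ltrD.
Unshelve. all: end_near.
Qed.

Definition expC_coeff (z : C) : nat -> C := fun n => (n`!%:R)^-1 * z ^+ n.

Lemma norm_expC_coeff (z : C) n :
  `|expC_coeff z n| = (exp_coeff (complex.Re `|z|) n)%:C.
Proof.
rewrite /expC_coeff /exp_coeff /= normrM normrX normfV normr_nat.
rewrite [`|z|]normC_real rmorphM rmorphXn /= fmorphV /= rmorph_nat.
by rewrite mulrC.
Qed.

Lemma is_cvg_series_le_exp_coeff (f : nat -> R) (x : R) :
  (forall n, `|f n| <= exp_coeff x n) -> cvgn (series (f : nat -> R^o)).
Proof.
move=> fx; apply: (@normed_cvg R R^o).
apply: (@series_le_cvg _ _ (exp_coeff `|x|)) => [n|n|n|].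
- exact: normr_ge0.
- exact: exp_coeff_ge0.
- apply: le_trans (fx n) _; rewrite /exp_coeff /= ler_wpM2r ?invr_ge0 ?ler0n //.
  by rewrite -normrX ler_norm.
- exact: is_cvg_series_exp_coeff.
Qed.

Lemma cvg_expC (z : C) : series (expC_coeff z) @ \oo --> expC z.
Proof.
pose sRe := series ((fun n => complex.Re (expC_coeff z n)) : nat -> R^o).
pose sIm := series ((fun n => complex.Im (expC_coeff z n)) : nat -> R^o).
have cvg_Re : cvgn sRe.
  apply: (is_cvg_series_le_exp_coeff (x := complex.Re `|z|)) => n.
  by rewrite -lecR -norm_expC_coeff normc_ge_Re.
have cvg_Im : cvgn sIm.
  apply: (is_cvg_series_le_exp_coeff (x := complex.Re `|z|)) => n.
  by rewrite -lecR -norm_expC_coeff normc_ge_Im.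
suff lim_z : series (expC_coeff z) @ \oo --> (limn sRe +i* limn sIm : C).
  by rewrite /expC -/(expC_coeff z) (cvg_lim _ lim_z).
apply: cvg_complex.
- by rewrite (_ : (fun n => _) = sRe) //; apply/funext => n; rewrite /sRe !seriesEord Re_sum.
- by rewrite (_ : (fun n => _) = sIm) //; apply/funext => n; rewrite /sIm !seriesEord Im_sum.
Qed.

Lemma series_expC_coeff_remainder (z w : C) K :
  series (expC_coeff (z + w)) K.+1 - series (expC_coeff z) K.+1
    - w * series (expC_coeff z) K =
  \sum_(n < K) ((n.+1)`!%:R)^-1 *
    ((z + w) ^+ n.+1 - z ^+ n.+1 - z ^+ n * w *+ n.+1).
Proof.
rewrite !seriesEord /= !big_ord_recl /expC_coeff /= !expr0 !mulr1 fact0 invr1.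
rewrite mulr_sumr.
have -> : forall (a b c : C), 1 + a - (1 + b) - c = a - b - c by move=> *; ring.
rewrite -!sumrB; apply: eq_bigr => i _.
rewrite /bump /= add1n factS natrM invfM -mulr_natr.
have i1 : (i.+1%:R : C) != 0 by rewrite pnatr_eq0.
have fi : (i`!%:R : C) != 0 by rewrite pnatr_eq0 -lt0n fact_gt0.
by field; rewrite fi addrC natr1 i1.
Qed.

Lemma expC_remainder_le (z w : C) : `|w| <= 1 ->
  `|expC (z + w) - expC z - w * expC z| <=
  `|w| ^+ 2 * (expR (complex.Re `|z| + 1))%:C.
Proof.
move=> w1; set r := complex.Re `|z| + 1.
have r0 : 0 <= r by rewrite addr_ge0 // -ler0c -normC_real.
apply: (lim_norm_le (u := fun K => series (expC_coeff (z + w)) K.+1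
   - series (expC_coeff z) K.+1 - w * series (expC_coeff z) K)).
  apply: cvgB; first apply: cvgB.
  - by have := cvg_expC (z := z + w); rewrite -cvg_shiftS.
  - by have := cvg_expC (z := z); rewrite -cvg_shiftS.
  - exact: cvgZ (cvg_cst w) (cvg_expC (z := z)).
move=> K; rewrite series_expC_coeff_remainder.
apply: le_trans (ler_norm_sum _ _ _) _.
apply: (@le_trans _ _ (\sum_(n < K) `|w| ^+ 2 * (exp_coeff r n.+1)%:C)).
  apply: ler_sum => n _; rewrite normrM normfV normr_nat.
  have -> : (exp_coeff r n.+1)%:C = (`|z| + 1) ^+ n.+1 / n.+1`!%:R :> C.
    rewrite /exp_coeff /= rmorphM rmorphXn fmorphV rmorph_nat rmorphD rmorph1.
    by rewrite [in RHS]normC_real.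
  rewrite mulrCA mulrC mulrA; apply: ler_wpM2r; first by rewrite invr_ge0 ler0n.
  by rewrite [leRHS]mulrC; apply: norm_exprD_sub_linear_le.
rewrite -mulr_sumr ler_wpM2l ?exprn_ge0 // -rmorph_sum lecR.
apply: (@le_trans _ _ (series (exp_coeff r) K.+1)).
  by rewrite seriesEord /= big_ord_recl /= lerDr exp_coeff_ge0.
apply: nondecreasing_cvgn_le; last exact: is_cvg_series_exp_coeff.
by apply: nondecreasing_series => n _ _; apply: exp_coeff_ge0.
Qed.

Lemma expC_difference_quotient (a z : C) :
  (fun h : C => h^-1 *: (expC (a * (h + z)) - expC (a * z))) @ 0^' -->
  a * expC (a * z).
Proof.
apply/cvgrPdist_lt => e e0.
set B : C := (expR (complex.Re `|a * z| + 1))%:C.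
have B0 : 0 <= B by rewrite ler0c expR_ge0.
have a1 : 0 < (`|a| + 1)^-1 by rewrite invr_gt0 ltr_pwDr.
have aBe : 0 < e / (`|a| ^+ 2 * B + 1).
  by rewrite divr_gt0 // ltr_pwDr // mulr_ge0 ?exprn_ge0.
near=> h.
have h0 : h != 0 by near: h; exact: nbhs_dnbhs_neq.
have ha : `|h| < (`|a| + 1)^-1 by near: h; exact: dnbhs0_lt.
have he : `|h| < e / (`|a| ^+ 2 * B + 1) by near: h; exact: dnbhs0_lt.
have ah1 : `|a * h| <= 1.
  rewrite normrM; apply: ltW.
  move: ha; rewrite -(ltr_pM2l (ltr_pwDr ltr01 (normr_ge0 a))).
  rewrite mulfV ?gt_eqF ?ltr_pwDr //; apply: le_lt_trans.
  by rewrite ler_wpM2r // lerDl.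
rewrite -[_ *: _]/(h^-1 * _) [a * (h + z)]mulrDr [a * h + _]addrC.
rewrite difference_quotient_sub // normrN normrM normfV.
apply: (@le_lt_trans _ _ (`|h|^-1 * (`|a * h| ^+ 2 * B))).
  by rewrite ler_wpM2l ?invr_ge0 ?normr_ge0 // expC_remainder_le.
have -> : `|h|^-1 * (`|a * h| ^+ 2 * B) = `|h| * (`|a| ^+ 2 * B).
  have nh0 : `|h| != 0 by rewrite normr_eq0.
  by rewrite normrM exprMn; field.
apply: (@le_lt_trans _ _ (`|h| * (`|a| ^+ 2 * B + 1))).
  by rewrite ler_wpM2l // lerDl.
by rewrite -ltr_pdivlMr // ltr_pwDr // mulr_ge0 ?exprn_ge0.
Unshelve. all: end_near.
Qed.

Lemma derive1_sum_expC n (a c : 'I_n -> C) :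
  derive1 (fun t : C => \sum_(k < n) c k * expC (a k * t)) =
  (fun t => \sum_(k < n) c k * a k * expC (a k * t)).
Proof.
apply/funext => z; apply: cvg_lim; first exact: norm_hausdorff.
have -> : (fun h : C => h^-1 *: (\sum_(k < n) c k * expC (a k * (h + z))
                                 - \sum_(k < n) c k * expC (a k * z))) =
    (fun h => \sum_(k < n) c k * (h^-1 *: (expC (a k * (h + z)) - expC (a k * z)))).
  apply/funext => h; rewrite -sumrB scaler_sumr; apply: eq_bigr => k _.
  by rewrite -mulrBr scalerAr.
apply: cvg_big => [|k _]; first exact: add_continuous.
rewrite -mulrA.
exact: cvgZ (cvg_cst (c k)) (expC_difference_quotient (a := a k) (z := z)).
Qed.

Lemma derive1n_sum_expC n (a c : 'I_n -> C) j :
  derive1n j (fun t : C => \sum_(k < n) c k * expC (a k * t)) =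
  (fun t => \sum_(k < n) c k * a k ^+ j * expC (a k * t)).
Proof.
elim: j => [|j IHj].
  by apply/funext => t; apply: eq_bigr => k _; rewrite expr0 mulr1.
rewrite derive1nS IHj derive1_sum_expC; apply/funext => t.
by apply: eq_bigr => k _; rewrite exprSr mulrA.
Qed.

End ComplexExponential.

Lemma coef_synthetic_division (R : comNzRingType) (q : {poly R}) (a : R) i d :
  q`_i = \sum_(j < d) (('X - a%:P) * q)`_(i.+1 + j) * a ^+ j + a ^+ d * q`_(i + d).
Proof.
elim: d => [|d IHd]; first by rewrite big_ord0 add0r expr0 mul1r addn0.
rewrite IHd big_ord_recr /= -addrA; congr (_ + _).
rewrite mulrBl coefB coefXM coefCM addSn /= addnS exprSr.
ring.
Qed.

Lemma horner_mx_coef (R : comNzRingType) n' (M : 'M[R]_n'.+1) (p : {poly R}) :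
  (size p <= n'.+1)%N -> horner_mx M p = \sum_(i < n'.+1) p`_i *: M ^+ i.
Proof.
move=> sp; have {1}-> : p = \poly_(i < n'.+1) p`_i.
  apply/polyP => i; rewrite coef_poly; case: ltnP => // ni.
  by rewrite nth_default // (leq_trans sp ni).
rewrite poly_def linear_sum; apply: eq_bigr => i _.
by rewrite linearZ /= rmorphXn /= horner_mx_X.
Qed.

Section Nodal.
Variables (F : fieldType) (n' : nat) (lambda : 'I_n'.+1 -> F).
Local Notation n := n'.+1.

(* [nodal_quo k] is the paper's C(X) / (X - lambda_k); its value at lambda_k
   is C'(lambda_k). *)
Definition nodal_quo (k : 'I_n) : {poly F} :=
  \prod_(m < n | m != k) ('X - (lambda m)%:P).

Lemma prod_XsubC_nodal_quo k :
  \prod_(m < n) ('X - (lambda m)%:P) = ('X - (lambda k)%:P) * nodal_quo k.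
Proof. by rewrite (bigD1 k). Qed.

Lemma size_nodal_quo k : size (nodal_quo k) = n.
Proof.
have := size_prod_XsubC (index_enum 'I_n) lambda.
rewrite (prod_XsubC_nodal_quo k) size_mul ?polyXsubC_eq0 ?monic_neq0 ?monic_prod_XsubC //.
by rewrite size_XsubC [index_enum _]unlock -enumT size_enum_ord => -[].
Qed.

Lemma horner_nodal_quo_neq j k : j != k -> (nodal_quo k).[lambda j] = 0.
Proof. by move=> jk; rewrite horner_prod (bigD1 j) //= hornerXsubC subrr mul0r. Qed.

Hypothesis lambda_inj : injective lambda.

Lemma horner_nodal_quo_neq0 k : (nodal_quo k).[lambda k] != 0.
Proof.
rewrite horner_prod; apply/prodf_neq0 => m mk.
by rewrite hornerXsubC subr_eq0 (inj_eq lambda_inj) eq_sym.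
Qed.

Variable M : 'M[F]_n.
Hypothesis char_poly_M : char_poly M = \prod_(k < n) ('X - (lambda k)%:P).

Lemma horner_mx_interpolation p : horner_mx M p =
  \sum_(k < n) (p.[lambda k] / (nodal_quo k).[lambda k]) *: horner_mx M (nodal_quo k).
Proof.
set L := \sum_(k < n) (p.[lambda k] / (nodal_quo k).[lambda k]) *: nodal_quo k.
have root_pL j : root (p - L) (lambda j).
  rewrite /root hornerD hornerN horner_sum (bigD1 j) //= big1 => [|k kj].
    by rewrite hornerZ mulfVK ?horner_nodal_quo_neq0 // addr0 subrr.
  by rewrite hornerZ (@horner_nodal_quo_neq j k) ?mulr0 // eq_sym.
have [q pLq] : exists q, p - L = q * \prod_(z <- map lambda (index_enum 'I_n)) ('X - z%:P).
  apply: uniq_roots_prod_XsubC; first by apply/allP => _ /mapP[j _ ->].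
  by rewrite uniq_rootsE map_inj_uniq // index_enum_uniq.
have : horner_mx M (p - L) = 0.
  by rewrite pLq big_map -char_poly_M rmorphM /= Cayley_Hamilton mulr0.
move/eqP; rewrite rmorphB /= subr_eq0 => /eqP ->.
by rewrite /L linear_sum; apply: eq_bigr => k _; rewrite linearZ.
Qed.

Lemma expr_interpolation j : M ^+ j =
  \sum_(k < n) (lambda k ^+ j / (nodal_quo k).[lambda k]) *: horner_mx M (nodal_quo k).
Proof.
have := horner_mx_interpolation 'X^j; rewrite rmorphXn /= horner_mx_X => ->.
by apply: eq_bigr => k _; rewrite hornerXn.
Qed.

End Nodal.

Section ResponseFunction.
Variable R : realType.
Local Notation C := ((R[i])^o).

Lemma coef_prod_XsubC_esymS N (lambda : 'I_N -> C) j : (j <= N)%N ->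
  (\prod_(k < N) ('X - (lambda k)%:P))`_j = (-1) ^+ (N - j) * esymS lambda (N - j).
Proof.
move=> jN; rewrite -(big_map lambda xpredT (fun z => 'X - z%:P)).
have size_l : size (map lambda (index_enum 'I_N)) = N.
  by rewrite size_map [index_enum _]unlock -enumT size_enum_ord.
rewrite coef_prod_XsubC size_l //; congr (_ * _).
apply: eq_bigr => A _; apply: eq_bigr => i _.
by rewrite (nth_map i) [index_enum _]unlock -?enumT ?size_enum_ord // nth_ord_enum.
Qed.

Variables (n' : nat) (lambda : 'I_n'.+1 -> C).
Local Notation N := n'.+1.

Lemma coef_nodal_quo k i : (i < N)%N -> (nodal_quo lambda k)`_i =
  \sum_(m < N - i) (-1) ^+ m * esymS lambda m * lambda k ^+ (N.-1 - i - m).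
Proof.
move=> iN; rewrite (coef_synthetic_division _ (lambda k) i (N - i)).
rewrite -prod_XsubC_nodal_quo (subnKC (ltnW iN)).
rewrite [(nodal_quo _ _)`_N]nth_default ?size_nodal_quo // mulr0 addr0.
rewrite (reindex_inj rev_ord_inj) /=; apply: eq_bigr => m _.
have mi := ltn_ord m.
rewrite (_ : (i.+1 + (N - i - m.+1) = N - m)%N); last by lia.
rewrite coef_prod_XsubC_esymS; last by lia.
have -> : (N - (N - m) = m)%N by lia.
by have -> : (N - i - m.+1 = N.-1 - i - m)%N by lia.
Qed.

Lemma Cprime_nodal_quo k : Cprime lambda k = (nodal_quo lambda k).[lambda k].
Proof. by rewrite horner_prod; apply: eq_bigr => m _; rewrite hornerXsubC. Qed.

Lemma respF_sum_expC :
  respF lambda = fun t => \sum_(k < N) (Cprime lambda k)^-1 * expC ('i * lambda k * t).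
Proof. by apply/funext => t; apply: eq_bigr => k _; rewrite mulrC. Qed.

Lemma Ecoef_nodal_quo i t : (i < N)%N -> Ecoef lambda i t =
  \sum_(k < N) expC ('i * lambda k * t) / Cprime lambda k * (nodal_quo lambda k)`_i.
Proof.
move=> iN; rewrite /Ecoef respF_sum_expC.
under eq_bigr do rewrite (derive1n_sum_expC (fun k => 'i * lambda k))
  [(- 'i) ^+ _ * _]mulr_sumr mulr_sumr.
rewrite exchange_big /=; apply: eq_bigr => k _.
rewrite coef_nodal_quo // mulr_sumr; apply: eq_bigr => m _.
set p := (N.-1 - i - m)%N; set u := (- 'i) ^+ p; pose v : C := 'i%C ^+ p.
have uv : u * v = 1 by rewrite -exprMn mulNr -expr2 sqr_i opprK expr1n.
rewrite exprMn -/v; transitivity ((u * v) * ((-1) ^+ m * esymS lambda m *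
  ((Cprime lambda k)^-1 * lambda k ^+ p * expC ('i * lambda k * t)))).
  by ring.
by rewrite uv mul1r; ring.
Qed.

Variable M : 'M[C]_N.
Hypothesis lambda_inj : injective lambda.
Hypothesis char_poly_M : char_poly M = \prod_(k < N) ('X - (lambda k)%:P).

Lemma expmx_interpolation s : expmx (s *: M) =
  \sum_(k < N) (expC (s * lambda k) / Cprime lambda k) *: horner_mx M (nodal_quo lambda k).
Proof.
rewrite /expmx; have -> : series (fun j => (j`!%:R)^-1 *: (s *: M) ^+ j) = fun K =>
    \sum_(k < N) (series (expC_coeff (s * lambda k)) K / Cprime lambda k) *:
      horner_mx M (nodal_quo lambda k).
  apply/funext => K; rewrite seriesEord /=.
  under eq_bigr do rewrite exprZn (expr_interpolation lambda_inj char_poly_M) !scaler_sumr.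
  rewrite exchange_big /=; apply: eq_bigr => k _.
  rewrite seriesEord /= mulr_suml scaler_suml Cprime_nodal_quo; apply: eq_bigr => j _.
  by rewrite !scalerA /expC_coeff exprMn !mulrA.
apply: cvg_lim; first exact: norm_hausdorff.
apply: cvg_big => [|k _]; first exact: add_continuous.
apply: cvgZ _ (cvg_cst _).
exact: cvgM (cvg_expC (z := s * lambda k)) (cvg_cst _).
Qed.

End ResponseFunction.

Theorem mainTheorem1 (R : realType) (N : nat) (M : 'M[(R[i])^o]_N)
    (lambda : 'I_N -> (R[i])^o) :
  (0 < N)%N ->
  injective lambda ->
  char_poly M = \prod_(k < N) ('X - (lambda k)%:P) ->
  forall t : (R[i])^o,
    expmx (('i * t) *: M) = \sum_(n < N) Ecoef lambda n t *: M ^+ n.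
Proof.
case: N M lambda => [//|n'] M lambda _ lambda_inj char_poly_M t.
rewrite (expmx_interpolation lambda_inj char_poly_M).
under [RHS]eq_bigr => i _ do rewrite Ecoef_nodal_quo // scaler_suml.
rewrite exchange_big /=; apply: eq_bigr => k _.
rewrite horner_mx_coef ?size_nodal_quo // scaler_sumr; apply: eq_bigr => i _.
by rewrite scalerA ['i * t * _]mulrAC.
Qed.
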